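(* There is a constant $c>0$ such that for every $i\ge1$, the $i$-bit roof game $G_{i\text{-bit}}$ on $n=4i$ players has at most $c\,n^5$ ceiling coalitions (while it has $2^{i}=2^{n/4}$ roof coalitions).
   Context: Players are $N=\{1,\dots,n\}$, $n=4i$. A coalition $S'$ is a direct left-shift of $S$ if there is $m\in S$, $2\le m\le n$, $m-1\notin S$, with $S'=(S\setminus\{m\})\cup\{m-1\}$; a left-shift is obtained by one or more successive direct left-shifts; right-shifts are defined symmetrically (replacing $m-1$ by $m+1$ and $2\le m\le n$ by $1\le m\le n-1$). For $k\in\{0,\dots,2^i-1\}$ with $i$-bit binary representation $b_1\cdots b_i$, $S_{k,i}=\bigcup_{j=1}^iB_j$ with $B_j=\{4(j-1)+2,4(j-1)+3\}$ if $b_j=0$ and $B_j=\{4(j-1)+1,4(j-1)+4\}$ if $b_j=1$. $G_{i\text{-bit}}$ is the simple game on $N$ in which a coalition is winning iff it contains some $S_{k,i}$ or a left-shift of some $S_{k,i}$; it is a canonical linear game whose roof coalitions (minimal winning coalitions all of whose right-shifts are losing) are exactly the $2^i$ coalitions $S_{k,i}$. A ceiling coalition is a maximal losing coalition (losing $S$ with $S\cup\{m\}$ winning for all $m\notin S$) all of whose left-shifts are winning. *)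

From mathcomp Require Import all_boot all_order all_algebra.
Set Implicit Arguments. Unset Strict Implicit. Unset Printing Implicit Defensive.

(* Players N = {1,...,n} are represented by the ordinals 'I_n:
   the ordinal p : 'I_n stands for player p+1. *)

Section RoofGame.
Variable n : nat.

Definition direct_left_shift (S S' : {set 'I_n}) : bool :=
  [exists m : 'I_n, exists m' : 'I_n,
     [&& val m' + 1 == val m, m \in S, m' \notin S & S' == m' |: (S :\ m)]].

Definition left_shift (S S' : {set 'I_n}) : bool :=
  [exists T : {set 'I_n}, direct_left_shift S T && connect direct_left_shift T S'].

End RoofGame.

(* For k with i-bit binary
   representation b_1 ... b_i (b_1 most significant), b_j = odd (k / 2^(i-j)).
   Block j (1-based) consists of players 4(j-1)+1 .. 4(j-1)+4, i.e. ordinals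
   4(j-1) .. 4(j-1)+3.  If b_j = 0 we take players 4(j-1)+2, 4(j-1)+3
   (ordinal offsets 1,2); if b_j = 1 we take players 4(j-1)+1, 4(j-1)+4
   (ordinal offsets 0,3). *)
Definition bit_of (i k j : nat) : bool := odd (k %/ 2 ^ (i - j)).

Definition S_roof (i k : nat) : {set 'I_(4 * i)} :=
  [set p : 'I_(4 * i) |
     let j := (val p %/ 4).+1 in
     let r := val p %% 4 in
     if bit_of i k j then (r == 0) || (r == 3) else (r == 1) || (r == 2)].

Definition winning_ibit (i : nat) (S : {set 'I_(4 * i)}) : bool :=
  [exists k : 'I_(2 ^ i), exists T : {set 'I_(4 * i)},
     ((T == S_roof i k) || left_shift (S_roof i k) T) && (T \subset S)].

Definition losing_ibit (i : nat) (S : {set 'I_(4 * i)}) : bool :=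
  ~~ winning_ibit S.

Definition maximal_losing_ibit (i : nat) (S : {set 'I_(4 * i)}) : bool :=
  losing_ibit S && [forall m : 'I_(4 * i), (m \notin S) ==> winning_ibit (m |: S)].

Definition ceiling_ibit (i : nat) (S : {set 'I_(4 * i)}) : bool :=
  maximal_losing_ibit S && [forall S' : {set 'I_(4 * i)}, left_shift S S' ==> winning_ibit S'].

From mathcomp Require Import all_boot all_order all_algebra.
From mathcomp Require Import zify.
Import Order.TTheory GRing.Theory Num.Theory.
Set Implicit Arguments. Unset Strict Implicit. Unset Printing Implicit Defensive.

(* Write [pcount S t] for the number of members of [S] below [t]. A left shift raises prefix
   counts and, conversely, a coalition whose prefix counts dominate those of [R] contains [R] or a
   left shift of [R]; so [S] wins iff its prefix counts dominate those of some roof. If a ceiling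
   coalition [S] had three descents (members whose predecessor is missing), the left shift at each
   of them would win, giving three roofs that dominate [S] except at one point each; gluing their
   bits block by block gives a roof dominating [S] itself, so [S] would win. A coalition with at
   most two descents is a union of three intervals, the first one starting at 0, and there are at
   most (n+1)^5 of those. *)

Section PrefixCounts.
Variable n : nat.
Implicit Types (R S T : {set 'I_n}) (t u y : nat).

Definition memn S u : bool := [exists x : 'I_n, (x \in S) && (val x == u)].

Definition pcount S t : nat := \sum_(u < t) memn S u.

Definition pcount_le R S : Prop := forall t, pcount R t <= pcount S t.

Definition descent S y : bool := [&& 0 < y, memn S y & ~~ memn S y.-1].

Lemma memnE S (x : 'I_n) : memn S x = (x \in S).
Proof.
apply/existsP/idP => [[x' /andP[x'S /eqP/val_inj <-]] //|xS].
by exists x; rewrite xS eqxx.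
Qed.

Lemma memn_out S u : n <= u -> memn S u = false.
Proof.
by move=> le_nu; apply/existsP => -[x /andP[_ /eqP xu]]; have := ltn_ord x; rewrite xu; lia.
Qed.

Lemma memn_ltn S u : memn S u -> u < n.
Proof. by case: (ltnP u n) => // /(memn_out S) ->. Qed.

Lemma memn_subset S T u : S \subset T -> memn S u <= memn T u.
Proof.
move=> /subsetP sST; case: (boolP (memn S u)) => // /existsP[x /andP[xS xu]].
suff -> : memn T u by [].
by apply/existsP; exists x; rewrite sST.
Qed.

Lemma pcount0 S : pcount S 0 = 0.
Proof. by rewrite /pcount big_ord0. Qed.

Lemma pcountS S t : pcount S t.+1 = pcount S t + memn S t.
Proof. by rewrite /pcount big_ord_recr. Qed.

Lemma pcount_mono S : {homo pcount S : t t' / t <= t'}.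
Proof.
move=> t t' /subnKC <-; elim: (t' - t) => [|d IH]; first by rewrite addn0.
by rewrite addnS pcountS; lia.
Qed.

Lemma pcount_out S t : n <= t -> pcount S t = pcount S n.
Proof.
move=> /subnKC <-; elim: (t - n) => [|d IH]; first by rewrite addn0.
by rewrite addnS pcountS memn_out ?addn0 //; lia.
Qed.

Lemma pcount_le_total S t : pcount S t <= pcount S n.
Proof.
by case: (leqP t n) => [/pcount_mono //|/ltnW le_nt]; rewrite pcount_out.
Qed.

Lemma pcount_subset S T : S \subset T -> pcount_le S T.
Proof. by move=> sST t; apply: leq_sum => u _; apply: memn_subset. Qed.

Lemma pcount_inj R T : (forall t, pcount R t = pcount T t) -> R = T.
Proof.
move=> eq_RT; apply/setP => x; rewrite -!memnE.
have := eq_RT x.+1; rewrite !pcountS eq_RT => /addnI.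
by case: memn; case: memn.
Qed.

Lemma descent_ltn S y : descent S y -> y < n.
Proof. by case/and3P => _ /memn_ltn. Qed.

Lemma pcount_swap S (m m' : 'I_n) : m' + 1 = m -> m \in S -> m' \notin S ->
  forall t, pcount (m' |: (S :\ m)) t = pcount S t + (t == m).
Proof.
move=> mm' mS m'S; elim=> [|t IH]; first by rewrite !pcount0; lia.
have memn_swap : memn (m' |: (S :\ m)) t = (t == m') || memn S t && (t != m).
  case: (ltnP t n) => [lt_tn|le_nt]; last first.
    rewrite !memn_out // andFb orbF; case: eqP => // tm'.
    by have := ltn_ord m'; rewrite -tm'; lia.
  by rewrite -[t]/(nat_of_ord (Ordinal lt_tn)) !memnE in_setU1 in_setD1 andbC.
have succ_m : (t.+1 == m) = (t == m') by apply/eqP/eqP; lia.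
rewrite !pcountS IH memn_swap succ_m.
case: (eqVneq t m') => [->|_]; last first.
  case: (eqVneq t m) => [->|_]; last by rewrite /= andbT; lia.
  by rewrite memnE mS /=; lia.
have -> : (m' == m :> nat) = false by apply/eqP; lia.
by rewrite memnE (negbTE m'S).
Qed.

Lemma direct_left_shift_pcount S S' : direct_left_shift S S' -> pcount_le S S'.
Proof.
case/existsP=> m /existsP[m' /and4P[/eqP mm' mS m'S /eqP ->]] t.
by rewrite pcount_swap //; lia.
Qed.

Lemma connect_left_shift_pcount S S' :
  connect (@direct_left_shift n) S S' -> pcount_le S S'.
Proof.
case/connectP=> p + ->; elim: p S => [|S'' p IH] S /=; first by move=> _ t.
case/andP=> shift_S path_p t.
exact: leq_trans (direct_left_shift_pcount shift_S t) (IH _ path_p t).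
Qed.

Lemma left_shift_pcount S S' : left_shift S S' -> pcount_le S S'.
Proof.
case/existsP=> T /andP[shift_S conn_T] t.
exact: leq_trans (direct_left_shift_pcount shift_S t) (connect_left_shift_pcount conn_T t).
Qed.

Lemma descent_direct_left_shift S y : descent S y ->
  exists2 S', direct_left_shift S S' & forall t, pcount S' t = pcount S t + (t == y).
Proof.
move=> dy; have lt_yn := descent_ltn dy; case/and3P: dy => y_gt0 yS y'S.
have lt_y'n : y.-1 < n by lia.
pose m := Ordinal lt_yn; pose m' := Ordinal lt_y'n.
have mm' : val m' + 1 = val m by rewrite /=; lia.
have mS : m \in S by rewrite -memnE.
have m'S : m' \notin S by rewrite -memnE.
exists (m' |: (S :\ m)); last exact: pcount_swap.
by apply/existsP; exists m; apply/existsP; exists m'; rewrite mm' mS m'S !eqxx.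
Qed.

Lemma gap_at_member R T u : pcount_le R T -> pcount R n = pcount T n ->
  pcount R u < pcount T u -> exists2 v, memn R v & pcount R v < pcount T v.
Proof.
move=> le_RT eq_n; move def_d: (n - u) => d; elim: d u def_d => [|d IH] u def_d gap_u.
  by move: gap_u; rewrite !(@pcount_out _ u) ?eq_n ?ltnn //; lia.
case Ru: (memn R u); first by exists u.
apply: (IH u.+1); first lia.
by rewrite pcountS Ru addn0; apply: leq_trans gap_u (pcount_mono T (leqnSn u)).
Qed.

(* Walking down the run of [R] that contains [v], the gap [pcount T - pcount R] cannot shrink. *)
Lemma gap_at_descent R T v : memn R v -> pcount R v < pcount T v ->
  exists2 y, descent R y & pcount R y < pcount T y.
Proof.
elim: v => [|v IH] Rv gap_v; first by rewrite !pcount0 in gap_v.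
case Rv1: (memn R v); last by exists v.+1; rewrite /descent /= ?Rv ?Rv1.
by apply: (IH Rv1); move: gap_v; rewrite !pcountS Rv1; case: (memn T v) => /=; lia.
Qed.

Lemma descent_of_pcount_le R T : pcount_le R T -> pcount R n = pcount T n -> R != T ->
  exists2 y, descent R y & pcount R y < pcount T y.
Proof.
move=> le_RT eq_n neq_RT.
have [u gap_u] : exists u, pcount R u < pcount T u.
  case: (boolP [exists u : 'I_n.+1, pcount R u < pcount T u]) => [/existsP[u] | /existsPn no_gap].
    by exists u.
  case/eqP: neq_RT; apply: pcount_inj => t.
  wlog le_tn : t / t <= n => [wlog_t|].
    by case: (leqP t n) => [|/ltnW le_nt]; [exact: wlog_t | rewrite !(pcount_out _ le_nt) wlog_t].
  by apply/eqP; rewrite eqn_leq le_RT leqNgt (no_gap (Ordinal (n := n.+1) le_tn)).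
have [v Rv gap_v] := gap_at_member le_RT eq_n gap_u.
exact: gap_at_descent Rv gap_v.
Qed.

Lemma connect_of_pcount_le R T : pcount_le R T -> pcount R n = pcount T n ->
  connect (@direct_left_shift n) R T.
Proof.
pose psum S := \sum_(t < n.+1) pcount S t.
have [d] := ubnP (psum T - psum R); elim: d R => [//|d IH] R lt_d le_RT eq_n.
have [->|neq_RT] := eqVneq R T; first exact: connect0.
have [y dy gap_y] := descent_of_pcount_le le_RT eq_n neq_RT.
have [S' shift_RS' pcount_S'] := descent_direct_left_shift dy.
have le_S'T : pcount_le S' T.
  by move=> t; rewrite pcount_S'; case: (eqVneq t y) => [->|_]; rewrite ?addn1 ?addn0.
have psum_S' : psum S' = (psum R).+1.
  rewrite /psum (eq_bigr (fun t : 'I_n.+1 => pcount R t + (t == y :> nat))) => [|t _];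
    last exact: pcount_S'.
  rewrite big_split /= -[RHS]addn1; congr (_ + _).
  have le_yn : y < n.+1 by have := descent_ltn dy; lia.
  rewrite (bigD1 (Ordinal le_yn)) //= eqxx big1 // => t neq_ty.
  by apply/eqP; rewrite eqb0; apply: contra neq_ty => /eqP ty; apply/eqP/val_inj.
have le_psum : psum S' <= psum T by apply: leq_sum => t _.
apply: connect_trans (connect1 shift_RS') (IH S' _ le_S'T _); first lia.
by rewrite pcount_S' -eq_n gtn_eqF ?addn0 // (descent_ltn dy).
Qed.

Lemma connect_left_shift R T : connect (@direct_left_shift n) R T -> R = T \/ left_shift R T.
Proof.
case/connectP=> [[|S p]] /= path_p ->; first by left.
case/andP: path_p => shift_RS path_p; right; apply/existsP; exists S.
by rewrite shift_RS; apply/connectP; exists p.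
Qed.

(* The witness is the set of the first [pcount R n] members of [S]. *)
Lemma pcount_le_subset_left_shift R S : pcount_le R S ->
  exists2 T, (T == R) || left_shift R T & T \subset S.
Proof.
move=> le_RS; pose T := [set x in S | pcount S x < pcount R n].
have pcount_T t : pcount T t = minn (pcount S t) (pcount R n).
  elim: t => [|t IH]; first by rewrite !pcount0 min0n.
  have memn_T : memn T t = memn S t && (pcount S t < pcount R n).
    case: (ltnP t n) => [lt_tn|le_nt]; last by rewrite !memn_out.
    by rewrite -[t]/(nat_of_ord (Ordinal lt_tn)) !memnE inE.
  by rewrite !pcountS memn_T IH; case: (memn S t) => /=; lia.
have le_RT : pcount_le R T.
  by move=> t; rewrite pcount_T; have := pcount_le_total R t; have := le_RS t; lia.
have eq_n : pcount R n = pcount T n by rewrite pcount_T; have := le_RS n; lia.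
exists T; last by apply/subsetP => x; rewrite inE => /andP[].
by case: (connect_left_shift (connect_of_pcount_le le_RT eq_n)) => [->|->]; rewrite ?eqxx ?orbT.
Qed.

End PrefixCounts.

Lemma exists_bits i (b : nat -> bool) :
  exists2 k, k < 2 ^ i & forall j, 0 < j <= i -> bit_of i k j = b j.
Proof.
elim: i => [|i [k lt_k bits_k]]; first by exists 0 => // j; lia.
exists (k.*2 + b i.+1) => [|j /andP[j_gt0 le_ji]].
  by rewrite expnS; case: (b i.+1) => /=; lia.
rewrite /bit_of; case: (eqVneq j i.+1) => [->|neq_ji].
  by rewrite subnn expn0 divn1 oddD odd_double; case: (b i.+1).
have -> : i.+1 - j = (i - j).+1 by lia.
rewrite expnS divnMA (_ : (k.*2 + b i.+1) %/ 2 = k); last by case: (b i.+1) => /=; lia.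
by rewrite -bits_k //; lia.
Qed.

(* Number of members of a roof block among its first [r] players, [b] being the block's bit. *)
Definition block_pcount (b : bool) (r : nat) : nat :=
  match r with 0 => 0 | 1 => b | 2 => 1 | 3 => 2 - b | _ => 2 end.

Lemma block_pcount_even b b' r : ~~ odd r -> block_pcount b r = block_pcount b' r.
Proof. by case: r => [|[|[|[|r]]]]. Qed.

Section Roof.
Variables i k : nat.
Local Notation R := (S_roof i k).

Lemma memn_roof a r : a < i -> r < 4 -> memn R (4 * a + r) =
  if bit_of i k a.+1 then (r == 0) || (r == 3) else (r == 1) || (r == 2).
Proof.
move=> lt_ai lt_r4; have lt_x : 4 * a + r < 4 * i by lia.
rewrite -[4 * a + r]/(nat_of_ord (Ordinal lt_x)) memnE inE /=.
have -> : (4 * a + r) %/ 4 = a by lia.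
by have -> : (4 * a + r) %% 4 = r by lia.
Qed.

Lemma pcount_roof_block a r : a < i -> r <= 4 ->
  pcount R (4 * a + r) = pcount R (4 * a) + block_pcount (bit_of i k a.+1) r.
Proof.
move=> lt_ai le_r4.
have m0 := @memn_roof a 0 lt_ai erefl; have m1 := @memn_roof a 1 lt_ai erefl.
have m2 := @memn_roof a 2 lt_ai erefl; have m3 := @memn_roof a 3 lt_ai erefl.
rewrite addn0 in m0; rewrite addn1 in m1; rewrite addn2 in m2; rewrite addn3 in m3.
case: r le_r4 => [|[|[|[|[|r]]]]] // _; rewrite ?addn0 ?addn1 ?addn2 ?addn3 ?addn4.
all: by rewrite ?pcountS ?m0 ?m1 ?m2 ?m3; case: (bit_of i k a.+1) => /=; lia.
Qed.

Lemma pcount_roof a r : a < i -> r <= 4 ->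
  pcount R (4 * a + r) = 2 * a + block_pcount (bit_of i k a.+1) r.
Proof.
have pcount_blocks a' : a' <= i -> pcount R (4 * a') = 2 * a'.
  elim: a' => [|a' IH] le_a'i; first exact: pcount0.
  rewrite (_ : 4 * a'.+1 = 4 * a' + 4); last lia.
  by rewrite pcount_roof_block // IH 1?ltnW //=; lia.
by move=> lt_ai le_r4; rewrite pcount_roof_block ?pcount_blocks // ltnW.
Qed.
End Roof.

Lemma pcount_le_blocks i (R S : {set 'I_(4 * i)}) :
  (forall a r, a < i -> 0 < r <= 4 -> pcount R (4 * a + r) <= pcount S (4 * a + r)) ->
  pcount_le R S.
Proof.
move=> le_blocks t; have [->|t_gt0] := posnP t; first by rewrite !pcount0.
case: (ltnP t (4 * i)) => [lt_t|le_t].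
  rewrite (_ : t = 4 * (t.-1 %/ 4) + (t.-1 %% 4).+1); last lia.
  by apply: le_blocks; lia.
rewrite !(pcount_out _ le_t); have [i0|i_gt0] := posnP i.
  have le_n0 : 4 * i <= 0 by lia.
  by rewrite -!(pcount_out _ le_n0) !pcount0.
have last_block : 4 * i.-1 + 4 = 4 * i by lia.
by have := @le_blocks i.-1 4; rewrite last_block; apply; lia.
Qed.

Lemma winning_ibitP i (S : {set 'I_(4 * i)}) :
  winning_ibit S <-> exists2 k, k < 2 ^ i & pcount_le (S_roof i k) S.
Proof.
split=> [|[k lt_k /pcount_le_subset_left_shift[T roof_T sub_TS]]].
  case/existsP=> k /existsP[T /andP[roof_T sub_TS]]; exists k => // t.
  apply: leq_trans (pcount_subset sub_TS t).
  by case/orP: roof_T => [/eqP -> // | /left_shift_pcount]; apply.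
by apply/existsP; exists (Ordinal lt_k); apply/existsP; exists T; rewrite roof_T.
Qed.

(* A roof's prefix count inside a block depends on the block's bit only at the two odd offsets,
   and at most two of the three exceptional points can hit them; so each bit can be copied from a
   roof whose exceptional point lies elsewhere. *)
Lemma pcount_le_roof_of_three_shifts i (S : {set 'I_(4 * i)}) y1 y2 y3 k1 k2 k3 :
  y1 < y2 < y3 ->
  (forall t, pcount (S_roof i k1) t <= pcount S t + (t == y1)) ->
  (forall t, pcount (S_roof i k2) t <= pcount S t + (t == y2)) ->
  (forall t, pcount (S_roof i k3) t <= pcount S t + (t == y3)) ->
  exists2 k, k < 2 ^ i & pcount_le (S_roof i k) S.
Proof.
move=> lt_y le_k1 le_k2 le_k3.
pose avoids y a := (y != 4 * a + 1) && (y != 4 * a + 3).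
pose b j := if avoids y1 j.-1 then bit_of i k1 j
            else if avoids y2 j.-1 then bit_of i k2 j else bit_of i k3 j.
have [k lt_k bits_k] := exists_bits i b.
exists k => //; apply: pcount_le_blocks => a r lt_ai /andP[r_gt0 le_r4].
have copy kq yq : (forall t, pcount (S_roof i kq) t <= pcount S t + (t == yq)) ->
    yq != 4 * a + r -> (odd r -> bit_of i kq a.+1 = bit_of i k a.+1) ->
    pcount (S_roof i k) (4 * a + r) <= pcount S (4 * a + r).
  move=> le_kq neq_yq same_bit; have := le_kq (4 * a + r).
  rewrite eq_sym (negbTE neq_yq) addn0 !pcount_roof //.
  case: (boolP (odd r)) => [/same_bit -> // | /block_pcount_even even_r].
  by rewrite (even_r _ (bit_of i kq a.+1)).
have bit_k : bit_of i k a.+1 = b a.+1 by apply: bits_k; lia.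
rewrite /b /= in bit_k.
case: (boolP (odd r)) => [odd_r | even_r]; last first.
  have [eq_y1 | neq_y1] := eqVneq y1 (4 * a + r).
    by apply: (copy k2 y2) => //; [rewrite -eq_y1; lia | rewrite (negbTE even_r)].
  by apply: (copy k1 y1) => //; rewrite (negbTE even_r).
case avoid1: (avoids y1 a) in bit_k.
  by apply: (copy k1 y1) => //; move: avoid1 odd_r le_r4 r_gt0; rewrite /avoids; lia.
case avoid2: (avoids y2 a) in bit_k.
  by apply: (copy k2 y2) => //; move: avoid2 odd_r le_r4 r_gt0; rewrite /avoids; lia.
apply: (copy k3 y3) => //.
by move: avoid1 avoid2 odd_r le_r4 r_gt0 lt_y; rewrite /avoids; lia.
Qed.

Definition at_most_two_descents n (S : {set 'I_n}) : Prop :=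
  forall y1 y2 y3, descent S y1 -> descent S y2 -> descent S y3 -> y1 < y2 < y3 -> False.

Lemma ceiling_ibit_at_most_two_descents i (S : {set 'I_(4 * i)}) :
  ceiling_ibit S -> at_most_two_descents S.
Proof.
case/andP=> /andP[losing_S _] /forallP shifts_win y1 y2 y3 d1 d2 d3 lt_y.
have near_roof y : descent S y ->
    exists kq, forall t, pcount (S_roof i kq) t <= pcount S t + (t == y).
  move=> dy; have [S' shift_SS' pcount_S'] := descent_direct_left_shift dy.
  have : left_shift S S' by apply/existsP; exists S'; rewrite shift_SS' connect0.
  move/(implyP (shifts_win S'))/winning_ibitP => [kq _ le_kq].
  by exists kq => t; rewrite -pcount_S'.
have [k1 le_k1] := near_roof _ d1; have [k2 le_k2] := near_roof _ d2.
have [k3 le_k3] := near_roof _ d3.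
case/negP: losing_S; apply/winning_ibitP.
exact: pcount_le_roof_of_three_shifts lt_y le_k1 le_k2 le_k3.
Qed.

Section Intervals.
Variables (n : nat) (S : {set 'I_n}).

Lemma descent_free_interval a b : (forall y, a < y < b -> ~~ descent S y) ->
  exists c, forall x, a <= x < b -> memn S x = (x < c).
Proof.
elim: b => [|b IH] no_descent; first by exists 0 => x; lia.
have [c mem_c] : exists c, forall x, a <= x < b -> memn S x = (x < c).
  by apply: IH => y /andP[lt_ay lt_yb]; apply: no_descent; lia.
case Sb: (memn S b); last first.
  exists (minn c b) => x /andP[le_ax]; rewrite ltnS leq_eqVlt => /orP[/eqP-> | lt_xb].
    by rewrite Sb; lia.
  by rewrite mem_c ?le_ax //; lia.
exists b.+1 => x /andP[le_ax]; rewrite ltnS leq_eqVlt => /orP[/eqP-> | lt_xb].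
  by rewrite Sb; lia.
have Sb' : memn S b.-1.
  have b_gt0 : 0 < b by lia.
  by have := no_descent b; rewrite /descent b_gt0 Sb /= negbK; apply; lia.
have lt_c : b.-1 < c by rewrite -mem_c //; lia.
by rewrite mem_c ?le_ax //; lia.
Qed.

Lemma exists_next_descent a : exists y, (a < y) && (descent S y || (n <= y)).
Proof. by exists (n + a).+1; apply/andP; split; [lia | apply/orP; right; lia]. Qed.

Definition next_descent a : nat := ex_minn (exists_next_descent a).

Lemma next_descentP a :
  [/\ a < next_descent a, next_descent a < n -> descent S (next_descent a)
    & forall y, a < y < next_descent a -> ~~ descent S y].
Proof.
rewrite /next_descent; case: ex_minnP => m /andP[lt_am dm] min_m; split=> //.
  by move=> lt_mn; case/orP: dm => //; rewrite leqNgt lt_mn.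
move=> y /andP[lt_ay lt_ym]; apply/negP => dy.
by have := min_m y; rewrite lt_ay dy => /(_ isT); lia.
Qed.

Definition three_intervals (c1 c2 c3 c4 c5 : nat) : {set 'I_n} :=
  [set x : 'I_n | [|| x < c1, c2 <= x < c3 | c4 <= x < c5]].

Lemma three_intervals_of_descents : at_most_two_descents S ->
  exists c1 c2 c3 c4 c5, S = three_intervals c1 c2 c3 c4 c5.
Proof.
move=> two_descents; pose d1 := next_descent 0; pose d2 := next_descent d1.
have [lt_d1 desc_d1 free1] := next_descentP 0.
have [lt_d2 desc_d2 free2] := next_descentP d1.
have free3 y : d2 < y < n -> ~~ descent S y.
  move=> /andP[lt_y lt_yn]; apply/negP => dy.
  by apply: (two_descents _ _ _ (desc_d1 _) (desc_d2 _) dy); lia.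
have [c1 mem1] := descent_free_interval free1.
have [c3 mem3] := descent_free_interval free2.
have [c5 mem5] := descent_free_interval free3.
exists (minn c1 d1), d1, (minn c3 d2), d2, c5; apply/setP => x; rewrite inE -memnE.
have lt_xn := ltn_ord x.
have [lt_x1|le_1x] := ltnP x d1; first by rewrite mem1 //; lia.
have [lt_x2|le_2x] := ltnP x d2; first by rewrite mem3 ?le_1x //; lia.
by rewrite mem5 ?le_2x //; lia.
Qed.

End Intervals.

Lemma card_at_most_two_descents n (P : pred {set 'I_n}) :
  (forall S, P S -> at_most_two_descents S) -> #|[set S | P S]| <= n.+1 ^ 5.
Proof.
move=> two_descents.
pose f (c : 'I_n.+1 * 'I_n.+1 * 'I_n.+1 * 'I_n.+1 * 'I_n.+1) :=
  three_intervals n c.1.1.1.1 c.1.1.1.2 c.1.1.2 c.1.2 c.2.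
have sub_img : [set S | P S] \subset f @: [set: _].
  apply/subsetP => S; rewrite inE => /two_descents/three_intervals_of_descents.
  case=> c1 [c2 [c3 [c4 [c5 ->]]]]; apply/imsetP.
  exists (inord (minn c1 n), inord (minn c2 n), inord (minn c3 n), inord (minn c4 n),
          inord (minn c5 n)) => //.
  by apply/setP => x; rewrite !inE /= !inordK; have := ltn_ord x; lia.
apply: leq_trans (subset_leq_card sub_img) _; apply: leq_trans (leq_imset_card _ _) _.
by rewrite cardsT !card_prod !card_ord !expnS expn0 muln1 !mulnA.
Qed.

Local Open Scope ring_scope.

Theorem corollary3 :
  exists c : rat, 0 < c /\
    forall i : nat, (1 <= i)%N ->
      (#|[set S : {set 'I_(4 * i)} | ceiling_ibit S]|%:R : rat)
        <= c * ((4 * i)%N%:R) ^+ 5.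
Proof.
exists 32%:R; split=> [|i i_gt0]; first by rewrite ltr0n.
have card_ceil := card_at_most_two_descents (@ceiling_ibit_at_most_two_descents i).
rewrite -natrX -natrM ler_nat; apply: leq_trans card_ceil _.
rewrite (_ : 32 = 2 ^ 5)%N // -expnMn leq_exp2r //; lia.
Qed.
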